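(* Let $G$ be any graph and let $C$ be a set of $k$ bicliques of $G$ such that every two of them are mutually included. Then the elements of $C$ can be ordered as $P_1,\dots,P_k$ and their sides named $P_i=X_iY_i$ ($1\le i\le k$) so that $X_1\subsetneq X_2\subsetneq\cdots\subsetneq X_k$ and $Y_k\subsetneq Y_{k-1}\subsetneq\cdots\subsetneq Y_1$.
   Context: All graphs are finite and simple. A biclique of a graph $G$ is a set $P\subseteq V(G)$ such that the induced subgraph $G[P]$ is a complete bipartite graph with both parts nonempty, and $P$ is inclusion-maximal with this property. Since $G[P]$ is connected, its bipartition into two nonempty independent sets $X,Y$ (every vertex of $X$ adjacent to every vertex of $Y$) is unique; we write $P=XY$ to mean $P=X\cup Y$ with $X,Y$ these two parts, called the sides of $P$. Two bicliques $P,Q$ of $G$ are mutually included if their sides can be named $P=X_PY_P$, $Q=X_QY_Q$ so that $X_Q\subsetneq X_P$ and $Y_P\subsetneq Y_Q$. *)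

From mathcomp Require Import all_boot.
Set Implicit Arguments. Unset Strict Implicit. Unset Printing Implicit Defensive.

Definition simple_graph (T : finType) (e : rel T) : Prop :=
  symmetric e /\ irreflexive e.

(* X, Y are the two sides of a complete bipartite induced subgraph on P = X ∪ Y:
   both nonempty, disjoint, independent, and every x in X adjacent to every y in Y. *)
Definition sides (T : finType) (e : rel T) (P X Y : {set T}) : Prop :=
  [/\ P = X :|: Y, X != set0, Y != set0 & [disjoint X & Y]] /\
  [/\ {in X &, forall x x', ~~ e x x'},
      {in Y &, forall y y', ~~ e y y'} &
      {in X & Y, forall x y, e x y}].

Definition cbip (T : finType) (e : rel T) (P : {set T}) : Prop :=
  exists X Y, sides e P X Y.

Definition biclique (T : finType) (e : rel T) (P : {set T}) : Prop :=
  cbip e P /\ forall Q : {set T}, cbip e Q -> P \subset Q -> Q = P.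

Definition mutually_included (T : finType) (e : rel T) (P Q : {set T}) : Prop :=
  exists XP YP XQ YQ, [/\ sides e P XP YP, sides e Q XQ YQ,
                          XQ \proper XP & YP \proper YQ].

From mathcomp Require Import all_boot.
Set Implicit Arguments. Unset Strict Implicit. Unset Printing Implicit Defensive.

(* The bipartition of a complete bipartite induced subgraph is
   unique up to swapping its two sides: one side is the neighbourhood, inside
   the vertex set, of any vertex of the other side.  Fix a reference biclique
   P0 = X0Y0 of C.  Every other Q in C is mutually included with P0, so Q has
   sides XQ YQ "aligned" with X0 Y0: XQ <= X0 and Y0 <= YQ, or conversely.
   For two aligned bicliques Q, R, mutual inclusion can only hold in the
   "uncrossed" naming of their sides (a crossed naming XR <= YQ, XQ <= YR
   contradicts the independence or the disjointness of X0 and Y0), so the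
   aligned sides of the members of C form a strict chain: X grows while Y
   shrinks.  Sorting C along this chain yields the required enumeration. *)

Section Sides.

Variables (T : finType) (e : rel T).

Lemma sides_sym (P X Y : {set T}) :
  symmetric e -> sides e P X Y -> sides e P Y X.
Proof.
move=> sym [[-> nX nY dXY] [iX iY cXY]]; split; split => //.
- by rewrite setUC.
- by rewrite disjoint_sym.
- by move=> y x yY xX; rewrite sym; apply: cXY.
Qed.

Lemma sides_opposite (P X Y : {set T}) x :
  sides e P X Y -> x \in X -> Y = [set y in P | e x y].
Proof.
move=> [[EP _ _ _] [iX _ cXY]] xX; apply/setP => y; rewrite inE EP inE.
case yY: (y \in Y); first by rewrite orbT (cXY _ _ xX yY).
by rewrite orbF; case yX: (y \in X); rewrite // (negbTE (iX _ _ xX yX)).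
Qed.

Lemma sides_complement (P X Y : {set T}) : sides e P X Y -> X = P :\: Y.
Proof.
by move=> [[-> _ _ dXY] _]; rewrite setDUl setDv setU0; apply/esym/setDidPl.
Qed.

Lemma sides_unique (P X Y X' Y' : {set T}) :
  symmetric e -> sides e P X Y -> sides e P X' Y' ->
  (X' = X /\ Y' = Y) \/ (X' = Y /\ Y' = X).
Proof.
move=> sym sXY sXY'.
have [[EP' nX' _ _] _] := sXY'; have [[EP _ _ _] _] := sXY.
case/set0Pn: nX' => x xX'.
have /setUP[xX | xY] : x \in X :|: Y by rewrite -EP EP' inE xX'.
- have EY : Y' = Y by rewrite (sides_opposite sXY xX) (sides_opposite sXY' xX').
  by left; rewrite (sides_complement sXY) (sides_complement sXY') EY.
- have sYX := sides_sym sym sXY.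
  have EX : Y' = X by rewrite (sides_opposite sYX xY) (sides_opposite sXY' xX').
  by right; rewrite (sides_complement sYX) (sides_complement sXY') EX.
Qed.

End Sides.

Definition aligned (T : finType) (X0 Y0 X Y : {set T}) : Prop :=
  (X \subset X0 /\ Y0 \subset Y) \/ (X0 \subset X /\ Y \subset Y0).

Lemma aligned_swap (T : finType) (X0 Y0 X Y : {set T}) :
  aligned X0 Y0 X Y -> aligned Y0 X0 Y X.
Proof. by case=> [[sX sY] | [sX sY]]; [right | left]. Qed.

Lemma aligned_no_crossing (T : finType) (e : rel T)
    (P0 X0 Y0 Q XQ YQ R XR YR : {set T}) :
  sides e P0 X0 Y0 -> sides e Q XQ YQ -> sides e R XR YR ->
  aligned X0 Y0 XQ YQ -> aligned X0 Y0 XR YR ->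
  XR \subset YQ -> XQ \subset YR -> False.
Proof.
move=> [[_ nX0 _ d0] [iX0 _ _]] [[_ nXQ _ _] _] [[_ nXR _ _] [_ _ cR]].
move=> aQ aR sRQ sQR.
case/set0Pn: nXQ => q qQ; case/set0Pn: nXR => r rR; case/set0Pn: nX0 => z z0.
have qYR := subsetP sQR _ qQ; have rYQ := subsetP sRQ _ rR.
case: aQ => [[Q1 Q2] | [Q1 Q2]]; case: aR => [[R1 R2] | [R1 R2]].
- by move: (iX0 _ _ (subsetP R1 _ rR) (subsetP Q1 _ qQ)); rewrite cR.
- by move: (subsetP R2 _ qYR); rewrite (disjointFr d0 (subsetP Q1 _ qQ)).
- by move: (subsetP Q2 _ rYQ); rewrite (disjointFr d0 (subsetP R1 _ rR)).
- have zYQ := subsetP sRQ _ (subsetP R1 _ z0).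
  by move: (subsetP Q2 _ zYQ); rewrite (disjointFr d0 z0).
Qed.

Section Alignment.

Variables (T : finType) (e : rel T).
Hypothesis sym : symmetric e.
Variables (P0 X0 Y0 : {set T}).
Hypothesis sP0 : sides e P0 X0 Y0.

Lemma aligned_sides_exist (Q : {set T}) :
  mutually_included e P0 Q ->
  exists XY : {set T} * {set T}, sides e Q XY.1 XY.2 /\ aligned X0 Y0 XY.1 XY.2.
Proof.
move=> [A [B [XQ [YQ [sAB sQ pX pY]]]]].
case: (sides_unique sym sP0 sAB) => -[EA EB]; rewrite EA EB in pX pY.
- by exists (XQ, YQ); split => //; left; split; apply: proper_sub.
- exists (YQ, XQ); split; first exact: sides_sym.
  by right; split; apply: proper_sub.
Qed.

Lemma aligned_mutual_chain (Q XQ YQ R XR YR : {set T}) :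
  sides e Q XQ YQ -> sides e R XR YR ->
  aligned X0 Y0 XQ YQ -> aligned X0 Y0 XR YR ->
  mutually_included e Q R ->
  (XQ \proper XR /\ YR \proper YQ) \/ (XR \proper XQ /\ YQ \proper YR).
Proof.
move=> sQ sR aQ aR [A [B [C [D [sAB sCD pX pY]]]]].
case: (sides_unique sym sQ sAB) => -[EA EB];
  case: (sides_unique sym sR sCD) => -[EC ED]; rewrite EA EB EC ED in pX pY.
- by right.
- exfalso; apply: (aligned_no_crossing (sides_sym sym sP0) (sides_sym sym sQ)
    (sides_sym sym sR) (aligned_swap aQ) (aligned_swap aR)); exact: proper_sub.
- exfalso; apply: (aligned_no_crossing sP0 sQ sR aQ aR); exact: proper_sub.
- by left.
Qed.

End Alignment.

Lemma mutual_sides_chain (T : finType) (e : rel T) (C : {set {set T}}) :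
  symmetric e -> (forall P, P \in C -> cbip e P) ->
  (forall P Q, P \in C -> Q \in C -> P != Q -> mutually_included e P Q) ->
  exists X Y : {set T} -> {set T},
    (forall Q, Q \in C -> sides e Q (X Q) (Y Q)) /\
    {in C &, forall Q R, Q != R ->
       ((X Q \proper X R) && (Y R \proper Y Q)) ||
       ((X R \proper X Q) && (Y Q \proper Y R))}.
Proof.
move=> sym cbipC mutC; case: (set_0Vmem C) => [-> | [P0 P0C]].
  by exists id, id; split => [Q | Q R]; rewrite inE.
have [X0 [Y0 sP0]] := cbipC _ P0C.
have aligned_exists Q : exists XY : {set T} * {set T},
    Q \in C -> sides e Q XY.1 XY.2 /\ aligned X0 Y0 XY.1 XY.2.
  case QC: (Q \in C); last by exists (set0, set0).
  have [<- | QP0] := eqVneq P0 Q.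
    by exists (X0, Y0) => _; split => //; left; split.
  by have [XY] := aligned_sides_exist sym sP0 (mutC _ _ P0C QC QP0); exists XY.
have [f alignedC] := fin_all_exists aligned_exists.
exists (fun Q => (f Q).1), (fun Q => (f Q).2).
split => [Q /alignedC[] // | Q R QC RC QR].
have [sQ aQ] := alignedC _ QC; have [sR aR] := alignedC _ RC.
by case: (aligned_mutual_chain sym sP0 sQ sR aQ aR (mutC _ _ QC RC QR))
  => -[-> ->]; rewrite ?orbT.
Qed.

Lemma enumerate_chain (U : finType) (C : {set U}) (lt : rel U) :
  transitive lt -> {in C &, forall a b, a != b -> lt a b || lt b a} ->
  exists Pf : 'I_#|C| -> U,
    [/\ injective Pf, (forall a, a \in C <-> exists i, Pf i = a) &
        (forall i j : 'I_#|C|, i < j -> lt (Pf i) (Pf j))].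
Proof.
move=> lt_trans lt_total.
pose le := [rel a b | (a == b) || lt a b].
have le_trans : transitive le.
  move=> b a c /orP[/eqP-> // | ab] /orP[/eqP<- | bc]; rewrite /= ?ab ?orbT //.
  by rewrite (lt_trans _ _ _ ab bc) orbT.
pose s := sort le (enum C).
have size_s : size s == #|C| by rewrite size_sort cardE.
pose t := Tuple size_s.
have inj_t : injective (tnth t).
  by apply/tuple_uniqP; rewrite /= sort_uniq enum_uniq.
have mem_t a : (a \in t) = (a \in C) by rewrite mem_sort mem_enum.
have sorted_t : sorted le t.
  apply: (@sort_sorted_in _ (mem C)); last by apply/allP => a; rewrite mem_enum.
  move=> a b aC bC /=; case: (eqVneq a b) => //= ab.
  by case/orP: (lt_total _ _ aC bC ab) => ->; rewrite ?orbT.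
exists (tnth t); split.
- exact: inj_t.
- by move=> a; rewrite -mem_t; split => [/tnthP[i ->] | [i <-]];
    [exists i | exact: mem_tnth].
- move=> i j ij; have x0 := tnth_default t i.
  have /orP[|//] : le (tnth t i) (tnth t j).
    rewrite !(tnth_nth x0); apply: (sorted_ltn_nth le_trans) => //;
      by rewrite inE size_tuple.
  by rewrite (inj_eq inj_t) -val_eqE /= (ltn_eqF ij).
Qed.

Theorem lemma4 (T : finType) (e : rel T) (k : nat) (C : {set {set T}}) :
  simple_graph e ->
  (forall P, P \in C -> biclique e P) ->
  #|C| = k ->
  (forall P Q, P \in C -> Q \in C -> P != Q -> mutually_included e P Q) ->
  exists (Pf X Y : 'I_k -> {set T}),
    [/\ injective Pf,
        (forall P, P \in C <-> exists i, Pf i = P),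
        (forall i, sides e (Pf i) (X i) (Y i)) &
        (forall i j : 'I_k, i < j -> X i \proper X j /\ Y j \proper Y i)].
Proof.
move=> [sym _] bicliqueC <- mutC.
have cbipC P : P \in C -> cbip e P by move=> /bicliqueC[].
have [X [Y [sidesC chainC]]] := mutual_sides_chain sym cbipC mutC.
pose lt Q R := (X Q \proper X R) && (Y R \proper Y Q).
have lt_trans : transitive lt.
  move=> R Q S /andP[XQR YRQ] /andP[XRS YSR].
  by rewrite /lt (proper_trans XQR XRS) (proper_trans YSR YRQ).
have [Pf [inj_Pf range_Pf incr_Pf]] := enumerate_chain lt_trans chainC.
exists Pf, (X \o Pf), (Y \o Pf); split => //.
- by move=> i; apply/sidesC/range_Pf; exists i.
- by move=> i j /incr_Pf/andP[].
Qed.
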